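(* If a triangle-free oriented graph $G$ has a cut vertex, then either $G$ has a full in-star cutset, or $G$ has a vertex of degree at most $1$.
   Context: Oriented graphs are finite, without loops, multiple arcs or pairs of opposite arcs; triangle-free, cut vertex, degree and connectivity refer to the underlying graph (a cut vertex is a vertex whose removal increases the number of connected components). $N^-[v]$ is $v$ together with its in-neighbors. A full in-star cutset of $G$ is a set $N^-[v]$, for some vertex $v$, such that $G\setminus N^-[v]$ is disconnected. *)

From mathcomp Require Import all_boot.
Set Implicit Arguments. Unset Strict Implicit. Unset Printing Implicit Defensive.

(* An oriented graph on a finite vertex type T is given by an arc relation
   [arc : rel T] (arc x y means x -> y) with no loops and no pair of
   opposite arcs. (No multiple arcs is automatic for a relation.) *)
Definition oriented (T : finType) (arc : rel T) : Prop :=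
  (forall x, ~~ arc x x) /\ (forall x y, arc x y -> ~~ arc y x).

Definition uadj (T : finType) (arc : rel T) : rel T :=
  fun x y => arc x y || arc y x.

Definition triangle_free (T : finType) (arc : rel T) : Prop :=
  forall x y z, ~ [&& uadj arc x y, uadj arc y z & uadj arc x z].

Definition udeg (T : finType) (arc : rel T) (v : T) : nat :=
  #|[set u | uadj arc v u]|.

Definition induced_adj (T : finType) (arc : rel T) (S : {set T}) : rel T :=
  fun x y => [&& x \in S, y \in S & uadj arc x y].

Definition conn_in (T : finType) (arc : rel T) (S : {set T}) (x y : T) : bool :=
  (x \in S) && connect (induced_adj arc S) x y.

Definition ncomp (T : finType) (arc : rel T) (S : {set T}) : nat :=
  #|[set [set y | conn_in arc S x y] | x in S]|.

Definition cut_vertex (T : finType) (arc : rel T) (v : T) : Prop :=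
  ncomp arc [set: T] < ncomp arc ([set: T] :\ v).

Definition disconnected_on (T : finType) (arc : rel T) (S : {set T}) : Prop :=
  1 < ncomp arc S.

Definition in_star (T : finType) (arc : rel T) (v : T) : {set T} :=
  v |: [set u | arc u v].

Definition full_in_star_cutset (T : finType) (arc : rel T) (v : T) : Prop :=
  disconnected_on arc (~: in_star arc v).

(* Let v be a cut vertex and assume every vertex has degree at least 2; we show
   that N^-[v] is a cutset.  G - v is disconnected, and every vertex x of G - v
   reaches, inside G - v, a vertex y that is not adjacent to v (hence outside
   N^-[v]): take y = x if x is not adjacent to v, otherwise a second neighbour
   w of x, which cannot be adjacent to v since x, v, w would form a triangle.
   So two components of G - v contain vertices outside N^-[v], and these lie in
   different components of the smaller graph G - N^-[v]. *)
From mathcomp Require Import all_boot.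

Set Implicit Arguments.
Unset Strict Implicit.
Unset Printing Implicit Defensive.

Section InducedConnectivity.
Variables (T : finType) (arc : rel T).

Lemma induced_adj_connect_sym (S : {set T}) : connect_sym (induced_adj arc S).
Proof.
apply: sym_connect_sym => x y; rewrite /induced_adj /uadj.
by rewrite andbCA [arc y x || _]orbC.
Qed.

Lemma disconnected_onP (S : {set T}) :
  reflect (exists x y, [/\ x \in S, y \in S & ~~ connect (induced_adj arc S) x y])
          (1 < ncomp arc S).
Proof.
apply: (iffP idP).
- case/card_gt1P => _ [_ [/imsetP [x xS ->] /imsetP [y yS ->] neq_xy]].
  exists x, y; split => //; apply: contra neq_xy => cxy.
  apply/eqP/setP => z; rewrite !inE /conn_in xS yS /=.
  by rewrite (same_connect (induced_adj_connect_sym S) cxy).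
- case=> x [y [xS yS ncxy]]; apply/card_gt1P.
  exists [set z | conn_in arc S x z], [set z | conn_in arc S y z].
  split; try exact: imset_f.
  apply: contra ncxy => /eqP /setP /(_ y).
  by rewrite !inE /conn_in xS yS /= connect0.
Qed.

Lemma ncomp_gt0 (S : {set T}) x : x \in S -> 0 < ncomp arc S.
Proof.
move=> xS; rewrite card_gt0; apply/set0Pn.
by exists [set z | conn_in arc S x z]; apply: imset_f.
Qed.

Lemma cut_vertex_disconnected v :
  cut_vertex arc v -> disconnected_on arc ([set: T] :\ v).
Proof. by apply: leq_ltn_trans; apply: (@ncomp_gt0 _ v); rewrite inE. Qed.

Lemma connect_induced_sub (S S' : {set T}) x y : S' \subset S ->
  connect (induced_adj arc S') x y -> connect (induced_adj arc S) x y.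
Proof.
move=> sS'S; apply: connect_sub => a b /and3P [aS' bS' ab].
by apply: connect1; rewrite /induced_adj (subsetP sS'S _ aS') (subsetP sS'S _ bS').
Qed.

Lemma disconnected_on_sub (S S' : {set T}) : S' \subset S ->
  (forall x, x \in S -> exists2 y, y \in S' & connect (induced_adj arc S) x y) ->
  disconnected_on arc S -> disconnected_on arc S'.
Proof.
move=> sS'S reach /disconnected_onP [x1 [x2 [x1S x2S nc12]]].
have [y1 y1S' c1] := reach x1 x1S; have [y2 y2S' c2] := reach x2 x2S.
apply/disconnected_onP; exists y1, y2; split => //; apply: contra nc12 => c12.
apply: connect_trans c1 _; apply: connect_trans (connect_induced_sub sS'S c12) _.
by rewrite induced_adj_connect_sym.
Qed.

Lemma udeg_gt1_other_neighbour x v :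
  1 < udeg arc x -> exists2 w, uadj arc x w & w != v.
Proof.
case/card_gt1P => a [b []]; rewrite !inE => xa xb neq_ab.
by case: (eqVneq a v) => [avE | ?]; [exists b; rewrite // -avE eq_sym | exists a].
Qed.

Lemma reach_non_neighbour v x :
  triangle_free arc -> x != v -> 1 < udeg arc x ->
  exists2 y, (y != v) && ~~ uadj arc v y & connect (induced_adj arc ([set: T] :\ v)) x y.
Proof.
move=> tf xv deg_x; have [xvadj | nxv] := boolP (uadj arc x v); last first.
  by exists x; rewrite // xv /uadj orbC.
have [w xw wv] := udeg_gt1_other_neighbour v deg_x.
have nvw : ~~ uadj arc v w.
  by apply/negP => vw; apply: (tf x w v); rewrite xw xvadj andbT /uadj orbC.
exists w; first by rewrite wv.
by apply: connect1; rewrite /induced_adj !inE xv wv.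
Qed.

Lemma in_star_compl_non_neighbour v y :
  (y != v) && ~~ uadj arc v y -> y \in ~: in_star arc v.
Proof. by rewrite !inE /uadj !negb_or => /and3P [-> _ ->]. Qed.

Lemma in_star_compl_sub v : ~: in_star arc v \subset [set: T] :\ v.
Proof. by apply/subsetP => z; rewrite !inE negb_or andbT => /andP []. Qed.

End InducedConnectivity.

Theorem lemma5p4 (T : finType) (arc : rel T) :
  oriented arc -> triangle_free arc ->
  (exists v : T, cut_vertex arc v) ->
  (exists v : T, full_in_star_cutset arc v) \/
  (exists v : T, udeg arc v <= 1).
Proof.
move=> _ tf [v cut_v].
have [/existsP [u deg_u] | /existsPn deg_gt1] := boolP [exists u, udeg arc u <= 1].
  by right; exists u.
left; exists v.
apply: (disconnected_on_sub (in_star_compl_sub arc v) _ (cut_vertex_disconnected cut_v)).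
move=> x; rewrite !inE andbT => xv.
have deg_x : 1 < udeg arc x by rewrite ltnNge deg_gt1.
have [y yv cxy] := reach_non_neighbour tf xv deg_x.
by exists y; first exact: in_star_compl_non_neighbour.
Qed.
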